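(* Let $G$ be a finite directed multigraph with at least one cycle, and let $H$ be its largest full subgraph (the subgraph with vertex set $V(G)$ whose edges are exactly the edges of $G$ that belong to some cycle of $G$). Then $$\dim P(G) = |E(H)| - |V(G)| + c(H) - 1,$$ where $c(H)$ is the number of connected components of $H$ (counting isolated vertices as components).
   Context: For a directed multigraph $G$: a walk is a sequence of edges $(e_1,\dots,e_k)$ with $\mathrm{ar}(e_i)=\mathrm{st}(e_{i+1})$; a cycle is a walk with $\mathrm{st}(e_1)=\mathrm{ar}(e_k)$; a path is a walk with distinct edges and distinct vertices except possibly $\mathrm{st}(e_1)=\mathrm{ar}(e_k)$; a simple cycle is a non-empty cycle that is a path. For a non-empty cycle $\mathcal{C}$, $(\vec{e}_{\mathcal{C}})_e=n_e(\mathcal{C})/|\mathcal{C}|$ for $e\in E(G)$ ($n_e$ = number of traversals of $e$, $|\mathcal{C}|$ = number of edges). $P(G)=\mathrm{conv}\{\vec{e}_{\mathcal{C}}\mid\mathcal{C}\text{ simple cycle of }G\}\subset\mathbb{R}^{E(G)}$. A subgraph $H=(V(G),E')$, $E'\subseteq E(G)$, is full if every edge of $E'$ lies on a cycle of $H$. The dimension of a polytope is that of its affine span. *)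

From HB Require Import structures.
From mathcomp Require Import all_boot all_order all_algebra.
Set Implicit Arguments. Unset Strict Implicit. Unset Printing Implicit Defensive.
Import Order.TTheory GRing.Theory Num.Theory.
Local Open Scope ring_scope.

(* A finite directed multigraph: vertex type V, edge type E (both finite),
   st e = start vertex, ar e = arrival vertex.  Loops and parallel edges allowed.
   Walks are sequences of edges. *)

Section Graph.
Variables (V E : finType) (st ar : E -> V).

Definition is_walk (s : seq E) : bool :=
  sorted (fun e f => ar e == st f) s.

(* a cycle: a walk with st e_1 = ar e_k (vacuous for the empty walk) *)
Definition is_cycle (s : seq E) : bool :=
  is_walk s && (if s is e :: _ then st e == ar (last e s) else true).

Definition walk_verts (s : seq E) : seq V :=
  if s is e :: _ then st e :: map ar s else [::].

(* a path: a walk with distinct edges and distinct vertices, except possibly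
   v_0 = v_k: all pairs (i,j), i<j, (i,j) <> (0,k) have v_i <> v_j *)
Definition is_gpath (s : seq E) : bool :=
  let vs := in_tuple (walk_verts s) in
  [&& is_walk s, uniq s &
    [forall i : 'I_(size (walk_verts s)), forall j : 'I_(size (walk_verts s)),
       ((i < j)%N && ~~ ((i == 0%N :> nat) && (j == size s :> nat))) ==>
       (tnth vs i != tnth vs j)]].

Definition is_simple_cycle (s : seq E) : bool :=
  [&& s != [::], is_cycle s & is_gpath s].

Definition cycle_vec (R : realFieldType) (s : seq E) : E -> R :=
  fun e => (count_mem e s)%:R / (size s)%:R.

Definition cycle_polytope (R : realFieldType) (x : E -> R) : Prop :=
  exists (cs : seq (seq E)) (lam : seq R),
    [/\ size lam = size cs,
        all is_simple_cycle cs,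
        all (fun l => 0 <= l) lam,
        \sum_(i < size cs) lam`_i = 1 &
        forall e, x e = \sum_(i < size cs) lam`_i * cycle_vec R (nth [::] cs i) e].

(* H: edges of G lying on some cycle of G; c(H): number of connected
   components of H (undirected connectivity; isolated vertices count) *)
Definition on_cycle (e : E) : Prop := exists s, is_cycle s /\ e \in s.

Definition sub_adj (EH : {set E}) : rel V :=
  fun x y => [exists e in EH, ((st e == x) && (ar e == y)) || ((st e == y) && (ar e == x))].

Definition n_components (EH : {set E}) : nat :=
  n_comp (sub_adj EH) (@predT V).
End Graph.

(* Affine dimension of a set S of R^E: S contains points p0, p_1..p_k with
   p_i - p0 linearly independent (k+1 affinely independent points). *)
Definition aff_indep_ge (R : realFieldType) (E : finType) (S : (E -> R) -> Prop) (k : nat) : Prop :=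
  exists (p0 : E -> R) (ps : 'I_k -> (E -> R)),
    [/\ S p0, (forall i, S (ps i)) &
        forall c : 'I_k -> R,
          (forall e, \sum_(i < k) c i * (ps i e - p0 e) = 0) -> forall i, c i = 0].

Definition affine_dim (R : realFieldType) (E : finType) (S : (E -> R) -> Prop) (d : nat) : Prop :=
  aff_indep_ge S d /\ forall k, aff_indep_ge S k -> (k <= d)%N.

From HB Require Import structures.
From mathcomp Require Import all_boot all_order all_algebra.
From mathcomp Require Import ring lra zify.
Import Order.TTheory GRing.Theory Num.Theory.
Local Open Scope ring_scope.
Set Implicit Arguments. Unset Strict Implicit. Unset Printing Implicit Defensive.

(* The vectors of the simple cycles lie in the cycle space Z of H (the
   circulations supported on the edges of H) and in the hyperplane of
   coordinate sum 1, and they span Z: a nonnegative circulation is a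
   nonnegative combination of simple cycles (repeatedly peel off a simple cycle
   of its support), and every circulation on H becomes nonnegative after adding
   a large multiple of a circulation that is positive on all of H.  Hence
   dim P(G) = dim Z - 1.  By rank-nullity, dim Z = |E(H)| - rank B, where B is
   the incidence matrix of H, and the left kernel of B consists of the vertex
   potentials that are constant on the components of H, so rank B = |V| - c(H). *)

Section AffineDimension.
Variables (R : realFieldType) (E : finType).

Definition vec_row (x : E -> R) : 'rV[R]_#|E| := \row_j x (enum_val j).

Definition points_mx n (p : 'I_n -> E -> R) : 'M[R]_(n, #|E|) :=
  \matrix_(i, j) p i (enum_val j).

Lemma vec_row_enum_rank (w : 'rV[R]_#|E|) : vec_row (fun e => w 0 (enum_rank e)) = w.
Proof. by apply/rowP => j; rewrite mxE enum_valK. Qed.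

Lemma row_points_mx n (p : 'I_n -> E -> R) i : row i (points_mx p) = vec_row (p i).
Proof. by apply/rowP => j; rewrite !mxE. Qed.

Lemma sum_enum_val (F : E -> R) : \sum_(j < #|E|) F (enum_val j) = \sum_e F e.
Proof. by rewrite -(big_enum_val F); apply: eq_bigl => e; rewrite inE. Qed.

Lemma aff_indep_ge_row_free (S : (E -> R) -> Prop) k (p : 'I_k.+1 -> E -> R) :
  (forall j, S (p j)) -> row_free (points_mx p) -> aff_indep_ge S k.
Proof.
move=> Sp free; exists (p ord0), (fun i => p (lift ord0 i)); split => // c rel.
pose u := \row_j (if unlift ord0 j is Some i then c i else - \sum_i c i).
have u0 : u = 0.
  apply/eqP; rewrite -(mulmx_free_eq0 _ free); apply/eqP/rowP => j.
  rewrite !mxE big_ord_recl !mxE unlift_none -[RHS](rel (enum_val j)).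
  under [X in _ + X]eq_bigr do rewrite !mxE liftK.
  rewrite mulNr mulr_suml -sumrN -big_split; apply: eq_bigr => i _ /=; ring.
by move=> i; have /rowP/(_ (lift ord0 i)) := u0; rewrite !mxE liftK.
Qed.

Lemma row_free_aff_indep_ge (S : (E -> R) -> Prop) k :
  (forall x, S x -> \sum_e x e = 1) -> aff_indep_ge S k ->
  exists2 p : 'I_k.+1 -> E -> R, (forall j, S (p j)) & row_free (points_mx p).
Proof.
move=> sum1 [p0 [ps [Sp0 Sps indep]]].
pose p j := if unlift ord0 j is Some i then ps i else p0.
have Sp j : S (p j) by rewrite /p; case: unlift.
exists p => //; apply: inj_row_free => u uP.
have rel e : \sum_j u 0 j * p j e = 0.
  transitivity ((u *m points_mx p) 0 (enum_rank e)); last by rewrite uP mxE.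
  by rewrite mxE; apply: eq_bigr => j _; rewrite mxE enum_rankK.
(* Points of coordinate sum 1 force a linear relation to be affine. *)
have usum : \sum_j u 0 j = 0.
  have : \sum_e \sum_j u 0 j * p j e = 0 by rewrite big1.
  rewrite exchange_big /= => sum0; rewrite -[RHS]sum0.
  by apply: eq_bigr => j _; rewrite -mulr_sumr sum1 ?mulr1.
rewrite big_ord_recl in usum.
have u_lift l : u 0 (lift ord0 l) = 0.
  apply: (indep (fun i => u 0 (lift ord0 i))) => e.
  rewrite -[RHS](rel e) big_ord_recl /p unlift_none.
  under [in RHS]eq_bigr do rewrite liftK.
  have -> : u 0 ord0 = - \sum_i u 0 (lift ord0 i) by apply/eqP; rewrite -addr_eq0 usum.
  rewrite mulNr mulr_suml -sumrN -big_split; apply: eq_bigr => i _ /=; ring.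
apply/rowP => j; rewrite mxE; case: (unliftP ord0 j) => [i ->|->] //.
by move: usum; under eq_bigr do rewrite u_lift; rewrite big1 // addr0.
Qed.

Lemma affine_dim_rank (S : (E -> R) -> Prop) m (Z : 'M[R]_(m, #|E|))
    n (p : 'I_n -> E -> R) :
  (forall x, S x -> (vec_row x <= Z)%MS /\ \sum_e x e = 1) ->
  (forall i, S (p i)) -> (Z <= points_mx p)%MS -> (0 < \rank Z)%N ->
  affine_dim S (\rank Z).-1.
Proof.
move=> SZ Sp Zp rZ_gt0; split; last first.
  move=> k /(row_free_aff_indep_ge (fun x Sx => (SZ x Sx).2)) [q Sq /eqP free].
  have qZ : (points_mx q <= Z)%MS.
    by apply/row_subP => j; rewrite row_points_mx; apply: (SZ _ (Sq j)).1.
  by rewrite -ltnS prednK // -free mxrankS.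
have pZ : (points_mx p <= Z)%MS.
  by apply/row_subP => i; rewrite row_points_mx; apply: (SZ _ (Sp i)).1.
have rp : \rank (points_mx p) = (\rank Z).-1.+1.
  by rewrite prednK //; apply/eqP; rewrite eqn_leq !mxrankS.
have : row_free (points_mx (fun i => p (maxrankfun (points_mx p) i))).
  suff -> : points_mx (fun i => p (maxrankfun (points_mx p) i)) =
            rowsub (maxrankfun (points_mx p)) (points_mx p) by apply: maxrowsub_free.
  by apply/matrixP => i j; rewrite !mxE.
by move: (maxrankfun _); rewrite rp => f; apply: aff_indep_ge_row_free.
Qed.
End AffineDimension.

Section Circulations.
Variables (R : realFieldType) (V E : finType) (st ar : E -> V).

Definition follows : rel E := fun e f => ar e == st f.

Lemma is_cycleE s : is_cycle st ar s = cycle follows s.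
Proof.
by case: s => [|e p] //=; rewrite /is_cycle /is_walk /= rcons_path eq_sym.
Qed.

Lemma map_st_path e p : path follows e p -> map st p = map ar (belast e p).
Proof. by elim: p e => [|f p IHp] e //= /andP[/eqP -> /IHp ->]. Qed.

Lemma perm_cycle_st_ar s : cycle follows s -> perm_eq (map st s) (map ar s).
Proof.
case: s => // e p /= /map_st_path; rewrite belast_rcons map_rcons => st_ar.
by rewrite -[ar e :: _]/(map ar (e :: p)) -st_ar perm_sym perm_rcons.
Qed.

Lemma simple_cycle_uniq_ar s :
  s != [::] -> cycle follows s -> uniq (map ar s) -> is_simple_cycle st ar s.
Proof.
case: s => [|e p] // _ cyc Uar; have Us := map_uniq Uar.
have cyc' := cyc; rewrite -is_cycleE in cyc'.
rewrite /is_simple_cycle cyc' /is_gpath Us.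
move: cyc'; rewrite /is_cycle => /andP[-> /eqP st_e] /=.
have nth_ar i : nth (st e) (ar e :: map ar p) i = nth (st e) (map ar (e :: p)) i by [].
apply/forallP => i; apply/forallP => j; apply/implyP => /andP[lij not0k].
rewrite !(tnth_nth (st e)) /=.
case: i j lij not0k => [[|i] li] [[|j] lj] //= lij not0k; rewrite size_map in li lj.
- have st_nth : st e = nth (st e) (map ar (e :: p)) (size p).
    by rewrite st_e (nth_map e) // -last_nth.
  rewrite [X in X != _]st_nth nth_ar (nth_uniq _ _ _ Uar) ?size_map /=; lia.
- rewrite !nth_ar (nth_uniq _ _ _ Uar) ?size_map /=; lia.
Qed.

Definition circulation (x : E -> R) := forall v,
  \sum_e x e * (ar e == v)%:R = \sum_e x e * (st e == v)%:R.

Definition edge_count (s : seq E) (e : E) : R := (count_mem e s)%:R.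

Lemma sum_edge_count s (F : E -> R) :
  \sum_e edge_count s e * F e = \sum_(a <- s) F a.
Proof.
elim: s => [|a s IHs]; first by rewrite big_nil big1 // => e _; rewrite mul0r.
rewrite big_cons -IHs /edge_count /=.
under eq_bigr do rewrite natrD mulrDl.
rewrite big_split /= (bigD1 a) //= eqxx mul1r big1 ?addr0 // => e /negbTE.
by rewrite eq_sym => ->; rewrite mul0r.
Qed.

Lemma circulation_edge_count s : cycle follows s -> circulation (edge_count s).
Proof.
move=> cyc v; rewrite !sum_edge_count.
rewrite -(big_map ar predT (fun b => (b == v)%:R)).
rewrite -(big_map st predT (fun b => (b == v)%:R)).
by apply: perm_big; rewrite perm_sym perm_cycle_st_ar.
Qed.

Lemma circulation_lincomb x y a : circulation x -> circulation y ->
  circulation (fun e => x e + a * y e).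
Proof.
move=> cx cy v.
under eq_bigr do rewrite mulrDl -mulrA.
under [in RHS]eq_bigr do rewrite mulrDl -mulrA.
by rewrite !big_split /= -!mulr_sumr cx cy.
Qed.

Lemma out_edge_in_support x e : (forall f, 0 <= x f) -> circulation x ->
  0 < x e -> exists2 f, 0 < x f & st f = ar e.
Proof.
move=> x_ge0 circ xe_gt0.
have term_ge0 f v : 0 <= x f * (st f == v)%:R by rewrite mulr_ge0.
have : \sum_f x f * (st f == ar e)%:R <> 0.
  rewrite -circ (bigD1 e) //= eqxx mulr1; apply/eqP; rewrite gt_eqF //.
  by rewrite ltr_wpDr // sumr_ge0 // => f _; rewrite mulr_ge0.
case/psumr_neq0P => [f _|f /= xf_gt0]; first exact: term_ge0.
exists f; last by apply/eqP; apply: contraTT xf_gt0 => /negbTE ->; rewrite mulr0 ltxx.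
by move: xf_gt0; case: (st f == ar e); rewrite ?mulr1 ?mulr0 ?ltxx.
Qed.

(* Following a successor map [e |-> g (ar e)] from [e0] eventually enters a
   loop of the map; its arrival vertices are distinct since [g] is a function. *)
Lemma simple_cycle_of_successor (P : pred E) (g : V -> E) e0 :
  P e0 -> (forall e, P e -> P (g (ar e)) /\ st (g (ar e)) = ar e) ->
  exists2 c, is_simple_cycle st ar c & all P c.
Proof.
move=> Pe0 gP; pose nx e := g (ar e).
have P_iter n : P (iter n nx e0) by elim: n => //= n /gP[].
have /trajectP[i lt_i_ord iter_eq] := looping_order nx e0.
pose y := iter i nx e0.
have cyc_y : fcycle nx (orbit nx y).
  apply/(orbitPcycle 3 0); exists (order nx e0 - i).-1.
  by rewrite prednK ?subn_gt0 // /y -iterD subnK ?iter_eq // ltnW.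
have P_orbit : all P (orbit nx y).
  by apply/allP => _ /trajectP[n _ ->]; rewrite /y -iterD.
exists (orbit nx y) => //; apply: simple_cycle_uniq_ar.
- by apply/eqP => c0; have := in_orbit nx y; rewrite c0.
- apply: (sub_in_cycle (P := P)) cyc_y => // a b Pa _ /eqP <-.
  by rewrite /follows (gP a Pa).2.
- rewrite map_inj_in_uniq // => a b a_c b_c ar_ab.
  by apply: (all_iffLR orbitPcycle 0 5 cyc_y) => //; rewrite /nx ar_ab.
Qed.

Lemma simple_cycle_in_support x e0 : (forall e, 0 <= x e) -> circulation x ->
  0 < x e0 -> exists2 c, is_simple_cycle st ar c & all (fun e => 0 < x e) c.
Proof.
move=> x_ge0 circ xe0_gt0.
pose g v := if [pick f | (0 < x f) && (st f == v)] is Some f then f else e0.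
apply: (simple_cycle_of_successor (P := fun e => 0 < x e) (g := g) xe0_gt0).
move=> e xe_gt0.
rewrite /g; case: pickP => [f /andP[-> /eqP] //|none].
have [f xf_gt0 st_f] := out_edge_in_support x_ge0 circ xe_gt0.
by have := none f; rewrite xf_gt0 st_f eqxx.
Qed.

Definition cycles_mx (cs : seq (seq E)) : 'M[R]_(size cs, #|E|) :=
  points_mx (fun i : 'I_(size cs) => cycle_vec R (nth [::] cs i)).

Definition cycle_spanned m (M : 'M[R]_(m, #|E|)) : Prop :=
  exists2 cs, all (is_simple_cycle st ar) cs & (M <= cycles_mx cs)%MS.

Lemma cycles_mx_catl cs1 cs2 : (cycles_mx cs1 <= cycles_mx (cs1 ++ cs2))%MS.
Proof.
apply/row_subP => i; have i_lt : (i < size (cs1 ++ cs2))%N.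
  by rewrite size_cat ltn_addr.
by apply: (eq_row_sub (Ordinal i_lt)); apply/rowP => j; rewrite !mxE nth_cat /= ltn_ord.
Qed.

Lemma cycles_mx_catr cs1 cs2 : (cycles_mx cs2 <= cycles_mx (cs1 ++ cs2))%MS.
Proof.
apply/row_subP => i; have i_lt : (size cs1 + i < size (cs1 ++ cs2))%N.
  by rewrite size_cat ltn_add2l.
apply: (eq_row_sub (Ordinal i_lt)); apply/rowP => j.
by rewrite !mxE nth_cat /= ltnNge leq_addr addKn.
Qed.

Lemma cycle_spanned_sub m n (A : 'M_(m, #|E|)) (B : 'M_(n, #|E|)) :
  (A <= B)%MS -> cycle_spanned B -> cycle_spanned A.
Proof. by move=> sAB [cs cs_simple sB]; exists cs => //; apply: submx_trans sB. Qed.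

Lemma cycle_spanned0 m : cycle_spanned (0 : 'M_(m, #|E|)).
Proof. by exists [::]; rewrite ?sub0mx. Qed.

Lemma cycle_spannedD m (A B : 'M_(m, #|E|)) :
  cycle_spanned A -> cycle_spanned B -> cycle_spanned (A + B).
Proof.
move=> [cs1 simple1 sA] [cs2 simple2 sB]; exists (cs1 ++ cs2).
  by rewrite all_cat simple1 simple2.
by rewrite addmx_sub // ?(submx_trans sA (cycles_mx_catl _ _))
  ?(submx_trans sB (cycles_mx_catr _ _)).
Qed.

Lemma cycle_spanned_rows m (M : 'M_(m, #|E|)) :
  (forall i, cycle_spanned (row i M)) -> cycle_spanned M.
Proof.
move=> rows_spanned; rewrite -[M]mul1mx mx1_sum_delta mulmx_suml.
apply: (big_ind (@cycle_spanned m)) => [|A B|i _].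
- exact: cycle_spanned0.
- exact: cycle_spannedD.
apply: cycle_spanned_sub (rows_spanned i).
have -> : delta_mx i i = delta_mx i (ord0 : 'I_1) *m delta_mx ord0 i :> 'M[R]_m.
  by rewrite mul_delta_mx.
by rewrite -mulmxA -rowE submxMl.
Qed.

Lemma cycle_spanned_cycle_vec c :
  is_simple_cycle st ar c -> cycle_spanned (vec_row (cycle_vec R c)).
Proof.
move=> c_simple; exists [:: c]; first by rewrite /= c_simple.
by apply: (eq_row_sub (ord0 : 'I_1)); apply/rowP => j; rewrite !mxE.
Qed.

Definition support (x : E -> R) : pred E := [pred e | x e != 0].

(* Subtracting the minimal value of [x] on a simple cycle kills one more edge. *)
Lemma peel_simple_cycle x e0 : (forall e, 0 <= x e) -> circulation x -> 0 < x e0 ->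
  exists c a (x' : E -> R), [/\ is_simple_cycle st ar c, forall e, 0 <= x' e,
    circulation x', (#|support x'| < #|support x|)%N &
    forall e, x e = x' e + a * cycle_vec R c e].
Proof.
move=> x_ge0 circ xe0_gt0.
have [c c_simple /allP c_pos] := simple_cycle_in_support x_ge0 circ xe0_gt0.
have [cne cyc_c /and3P[_ c_uniq _]] := and3P c_simple.
rewrite is_cycleE in cyc_c.
have c0_c : nth e0 c 0 \in c by rewrite mem_nth // lt0n size_eq0.
case: (arg_minP x c0_c) => em em_c em_min; pose mu := x em.
have {}em_c : em \in c := em_c.
have countE e : edge_count c e = (e \in c)%:R.
  by rewrite /edge_count count_uniq_mem // c_uniq.
pose x' e := x e + - mu * edge_count c e.
exists c, (mu * (size c)%:R), x'; split => //.
- move=> e; rewrite /x' countE; case: (boolP (e \in c)) => [e_c|_].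
    by rewrite mulr1 subr_ge0 em_min.
  by rewrite mulr0 addr0.
- exact: circulation_lincomb circ (circulation_edge_count cyc_c).
- apply: proper_card; apply/properP; split.
    apply/subsetP => e; rewrite !inE; apply: contraNN => /eqP xe0.
    have e_notc : e \notin c by apply/negP => /c_pos; rewrite xe0 ltxx.
    by rewrite /x' countE (negbTE e_notc) mulr0 addr0 xe0.
  exists em; first by rewrite inE gt_eqF ?c_pos.
  by rewrite inE negbK /x' countE em_c mulr1 subrr.
- move=> e; rewrite /x' /cycle_vec /edge_count; field.
  by rewrite pnatr_eq0 size_eq0.
Qed.

Lemma nonneg_circulation_spanned x : (forall e, 0 <= x e) -> circulation x ->
  cycle_spanned (vec_row x).
Proof.
have [k] := ubnP #|support x|; elim: k x => // k IHk x supp_lt x_ge0 circ.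
case: (pickP (support x)) => [e0 xe0|x0]; last first.
  suff -> : vec_row x = 0 by apply: cycle_spanned0.
  by apply/rowP => j; rewrite !mxE; apply/eqP/negbFE/x0.
have xe0_gt0 : 0 < x e0 by rewrite lt_def x_ge0 andbT.
have [c [a [x' [c_simple x'_ge0 circ' supp' xE]]]] :=
  peel_simple_cycle x_ge0 circ xe0_gt0.
have -> : vec_row x = vec_row x' + a *: vec_row (cycle_vec R c).
  by apply/rowP => j; rewrite !mxE xE.
apply: cycle_spannedD; first exact: IHk (leq_trans supp' supp_lt) x'_ge0 circ'.
apply: cycle_spanned_sub (cycle_spanned_cycle_vec c_simple).
exact: scalemx_sub (submx_refl _).
Qed.

Lemma covering_circulation (A : seq E) : {in A, forall e, on_cycle st ar e} ->
  exists y : E -> R, [/\ forall e, 0 <= y e, circulation y & {in A, forall e, 1 <= y e}].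
Proof.
elim: A => [|a A IHA] A_cyc.
  by exists (edge_count [::]); split => //; apply: circulation_edge_count.
have [y [y_ge0 circ y_ge1]] := IHA (fun e eA => A_cyc e (mem_behead (s := a :: A) eA)).
have [s [s_cyc a_s]] := A_cyc a (mem_head _ _); rewrite is_cycleE in s_cyc.
have count_ge0 e : 0 <= edge_count s e by rewrite ler0n.
exists (fun e => y e + 1 * edge_count s e); split.
- by move=> e; rewrite mul1r addr_ge0.
- exact: circulation_lincomb circ (circulation_edge_count s_cyc).
move=> e; rewrite inE mul1r => /predU1P[->|eA].
  have : 1 <= edge_count s a by rewrite ler1n -has_count has_pred1.
  by have := y_ge0 a; lra.
by have := y_ge1 e eA; have := count_ge0 e; lra.
Qed.

(* Adding a large multiple of a positive circulation makes [x] nonnegative. *)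
Lemma circulation_spanned x : circulation x ->
  (forall e, x e != 0 -> on_cycle st ar e) -> cycle_spanned (vec_row x).
Proof.
move=> circ supp_cyc.
have [y [y_ge0 circ_y y_ge1]] : exists y : E -> R, [/\ forall e, 0 <= y e,
    circulation y & {in enum (support x), forall e, 1 <= y e}].
  by apply: covering_circulation => e; rewrite mem_enum => /supp_cyc.
pose t := \sum_e `|x e|.
have t_ge0 : 0 <= t by apply: sumr_ge0.
have xty_ge0 e : 0 <= x e + t * y e.
  have [/eqP -> | xe0] := boolP (x e == 0); first by rewrite add0r mulr_ge0.
  have xe_le : `|x e| <= t by rewrite /t (bigD1 e) //= lerDl sumr_ge0.
  have ye_ge1 : 1 <= y e by rewrite y_ge1 // mem_enum.
  have := ler_norm (- x e); rewrite normrN; nra.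
have := nonneg_circulation_spanned xty_ge0 (circulation_lincomb t circ circ_y).
move/cycle_spannedD/(_ (cycle_spanned_sub (scalemx_sub (- t) (submx_refl _))
  (nonneg_circulation_spanned y_ge0 circ_y))).
by congr cycle_spanned; apply/rowP => j; rewrite !mxE; ring.
Qed.

Lemma sum_cycle_vec (c : seq E) : c != [::] -> \sum_e cycle_vec R c e = 1.
Proof.
move=> c_ne; rewrite /cycle_vec -mulr_suml.
rewrite (eq_bigr (fun e => edge_count c e * 1)) => [|e _]; last by rewrite mulr1.
rewrite sum_edge_count.
have -> : \sum_(a <- c) (1 : R) = (size c)%:R by rewrite -sum1_size natr_sum.
by rewrite divff // pnatr_eq0 size_eq0.
Qed.
End Circulations.

Section CycleSpace.
Variables (R : realFieldType) (V E : finType) (st ar : E -> V) (EH : {set E}).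

Lemma sum_mul_delta (T : finType) (G : T -> R) (a : T) :
  \sum_x G x * (a == x)%:R = G a.
Proof.
rewrite (bigD1 a) //= eqxx mulr1 big1 ?addr0 // => x /negbTE.
by rewrite eq_sym => ->; rewrite mulr0.
Qed.

Lemma sum_mul_delta_diff (T : finType) (G : T -> R) (a b : T) :
  \sum_x G x * ((a == x)%:R - (b == x)%:R) = G a - G b.
Proof. by under eq_bigr do rewrite mulrBr; rewrite sumrB !sum_mul_delta. Qed.

Definition incidence : 'M[R]_(#|E|, #|V|) := \matrix_(i, j)
  ((ar (enum_val i) == enum_val j)%:R - (st (enum_val i) == enum_val j)%:R).

Lemma circulation_incidence x :
  circulation st ar x <-> vec_row x *m incidence = 0.
Proof.
have flow v : (vec_row x *m incidence) 0 (enum_rank v) =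
    \sum_e x e * (ar e == v)%:R - \sum_e x e * (st e == v)%:R.
  rewrite mxE -sumrB.
  rewrite -(sum_enum_val (fun e => x e * (ar e == v)%:R - x e * (st e == v)%:R)).
  by apply: eq_bigr => i _; rewrite !mxE enum_rankK mulrBr.
split => [circ | /rowP flow0 v].
  by apply/rowP => j; rewrite -[j]enum_valK flow circ subrr mxE.
by apply/eqP; rewrite -subr_eq0 -flow flow0 mxE.
Qed.

Definition edges_mx : 'M[R]_(#|EH|, #|E|) :=
  \matrix_(k, j) (enum_val k == enum_val j)%:R.

Lemma sub_edges_mx x :
  (vec_row x <= edges_mx)%MS <-> (forall e, e \notin EH -> x e = 0).
Proof.
split => [/submxP[u xu] e e_notH | x0].
  have /rowP/(_ (enum_rank e)) := xu; rewrite !mxE enum_rankK => ->.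
  rewrite big1 // => k _; rewrite !mxE enum_rankK.
  case: eqP => [k_e|]; last by rewrite mulr0.
  by move: (enum_valP k); rewrite k_e (negbTE e_notH).
apply/submxP; exists (\row_k x (enum_val k)); apply/rowP => j.
rewrite !mxE; under eq_bigr do rewrite !mxE.
rewrite -(big_enum_val (fun e => x e * (e == enum_val j)%:R)).
have [jH | j_notH] := boolP (enum_val j \in EH).
  rewrite (bigD1 (enum_val j)) //= eqxx mulr1 big1 ?addr0 // => e /andP[_ /negbTE ->].
  by rewrite mulr0.
rewrite x0 // big1 // => e eH; case: eqP => [e_j|]; last by rewrite mulr0.
by move: eH j_notH; rewrite e_j => ->.
Qed.

Lemma rank_edges_mx : \rank edges_mx = #|EH|.
Proof.
apply/eqP; apply: inj_row_free => u /rowP u0; apply/rowP => k; rewrite mxE.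
have := u0 (enum_rank (enum_val k)); rewrite !mxE.
under eq_bigr do rewrite !mxE enum_rankK.
rewrite (bigD1 k) //= eqxx mulr1 big1 ?addr0 // => l l_k.
by case: eqP => [/enum_val_inj l_eq|]; [rewrite l_eq eqxx in l_k | rewrite mulr0].
Qed.

Definition cycle_space := (edges_mx :&: kermx incidence)%MS.

Lemma sub_cycle_space x : (vec_row x <= cycle_space)%MS <->
  (forall e, e \notin EH -> x e = 0) /\ circulation st ar x.
Proof.
rewrite sub_capmx.
split => [/andP[/sub_edges_mx ? /sub_kermxP/circulation_incidence] //|].
by case=> /sub_edges_mx -> /circulation_incidence/sub_kermxP ->.
Qed.

Definition adjacent := sub_adj st ar EH.

Lemma adjacent_sym : connect_sym adjacent.
Proof.
apply: sym_connect_sym => u v; rewrite /adjacent /sub_adj.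
by apply/existsP/existsP => -[e /andP[eH uv]]; exists e; rewrite eH orbC.
Qed.

Lemma connect_potential (psi : V -> R) :
  {in EH, forall e, psi (ar e) = psi (st e)} ->
  forall u v, connect adjacent u v -> psi u = psi v.
Proof.
move=> psi_EH u _ /connectP[p u_p ->]; elim: p u u_p => //= w p IHp u /andP[uw w_p].
rewrite -(IHp w w_p); case/existsP: uw => e /andP[eH /orP[]] /andP[/eqP <- /eqP <-].
  by rewrite psi_EH.
by rewrite psi_EH.
Qed.

Definition potentials := kermx (edges_mx *m incidence)^T.

Lemma edges_incidenceE k j : (edges_mx *m incidence) k j =
  (ar (enum_val k) == enum_val j)%:R - (st (enum_val k) == enum_val j)%:R.
Proof.
rewrite mxE; under eq_bigr do rewrite !mxE.
rewrite (sum_enum_val (fun e => (enum_val k == e)%:R *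
  ((ar e == enum_val j)%:R - (st e == enum_val j)%:R))).
by under eq_bigr do rewrite mulrC; rewrite sum_mul_delta.
Qed.

Lemma sub_potentials psi : (vec_row psi <= potentials)%MS <->
  {in EH, forall e, psi (ar e) = psi (st e)}.
Proof.
have drop k : (vec_row psi *m (edges_mx *m incidence)^T) 0 k =
    psi (ar (enum_val k)) - psi (st (enum_val k)).
  rewrite mxE; under eq_bigr do rewrite mxE [_^T _ _]mxE edges_incidenceE.
  by rewrite (sum_enum_val (fun v => psi v * ((ar (enum_val k) == v)%:R -
    (st (enum_val k) == v)%:R))) sum_mul_delta_diff.
split => [/sub_kermxP/rowP pot e eH | pot].
  have := pot (enum_rank_in eH e); rewrite drop mxE enum_rankK_in //.
  by move/eqP; rewrite subr_eq0 => /eqP.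
by apply/sub_kermxP/rowP => k; rewrite drop mxE pot ?subrr ?enum_valP.
Qed.

Definition component_roots : pred V := [pred v | roots adjacent v].

Lemma n_componentsE : n_components st ar EH = #|component_roots|.
Proof. by apply: eq_card => v; rewrite !inE andbT. Qed.

(* A potential vanishing at the root of every component vanishes. *)
Lemma rank_potentials_le : (\rank potentials <= #|component_roots|)%N.
Proof.
pose at_roots : 'M[R]_(#|V|, #|component_roots|) :=
  \matrix_(j, r) (enum_val j == enum_val r)%:R.
rewrite -(mxrank_mul_ker potentials at_roots).
suff /eqP -> : (potentials :&: kermx at_roots)%MS == 0.
  by rewrite mxrank0 addn0 rank_leq_col.
apply/rowV0P => w; rewrite sub_capmx -(vec_row_enum_rank w).
set psi := fun v => w 0 (enum_rank v).
move=> /andP[/sub_potentials psi_EH /sub_kermxP/rowP psi_roots].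
have psi_root r : r \in component_roots -> psi r = 0.
  move=> r_root; have := psi_roots (enum_rank_in r_root r); rewrite !mxE.
  under eq_bigr do rewrite !mxE enum_rankK_in //.
  rewrite (sum_enum_val (fun v => psi v * (v == r)%:R)).
  by under eq_bigr do rewrite eq_sym; rewrite sum_mul_delta.
apply/rowP => j; rewrite !mxE.
rewrite (connect_potential psi_EH (connect_root adjacent (enum_val j))) psi_root //.
by rewrite inE; apply: roots_root adjacent_sym _.
Qed.

Lemma rank_potentials_ge : (#|component_roots| <= \rank potentials)%N.
Proof.
pose indicators : 'M[R]_(#|component_roots|, #|V|) :=
  \matrix_(r, j) (fingraph.root adjacent (enum_val j) == enum_val r)%:R.
have root_r (r : 'I_#|component_roots|) :
    fingraph.root adjacent (enum_val r) = enum_val r.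
  by have := enum_valP r; rewrite inE => /eqP.
have /eqP <- : row_free indicators.
  apply: inj_row_free => u /rowP u0; apply/rowP => r; rewrite mxE.
  have := u0 (enum_rank (enum_val r)); rewrite !mxE.
  under eq_bigr do rewrite !mxE enum_rankK root_r.
  rewrite (bigD1 r) //= eqxx mulr1 big1 ?addr0 // => l l_r.
  by case: eqP => [/enum_val_inj l_eq|]; [rewrite l_eq eqxx in l_r | rewrite mulr0].
apply: mxrankS; apply/row_subP => r.
have -> : row r indicators =
    vec_row (fun v => (fingraph.root adjacent v == enum_val r)%:R).
  by apply/rowP => j; rewrite !mxE.
apply/sub_potentials => e eH; congr ((_ == _)%:R).
apply/esym/(fingraph.rootP adjacent_sym); apply: connect1.
by apply/existsP; exists e; rewrite eH !eqxx.
Qed.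

Lemma rank_cycle_space :
  (\rank cycle_space + #|V| = #|EH| + n_components st ar EH)%N.
Proof.
have rank_pot : \rank potentials = n_components st ar EH.
  by apply/eqP; rewrite n_componentsE eqn_leq rank_potentials_le rank_potentials_ge.
have := mxrank_ker (edges_mx *m incidence)^T; rewrite mxrank_tr -/potentials rank_pot.
have := mxrank_mul_ker edges_mx incidence; rewrite rank_edges_mx -/cycle_space.
have := rank_leq_col (edges_mx *m incidence).
move: (\rank (edges_mx *m incidence)) => r; lia.
Qed.

Lemma cycle_space_spanned : (forall e, e \in EH -> on_cycle st ar e) ->
  cycle_spanned st ar cycle_space.
Proof.
move=> EH_cycles; apply: cycle_spanned_rows => i.
pose x e := cycle_space i (enum_rank e).
have xE : row i cycle_space = vec_row x by apply/rowP => j; rewrite !mxE /x enum_valK.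
have /sub_cycle_space[x_EH circ] : (vec_row x <= cycle_space)%MS by rewrite -xE row_sub.
rewrite xE; apply: circulation_spanned circ _ => e xe0; apply: EH_cycles.
by apply: contraTT xe0 => /x_EH ->; rewrite negbK.
Qed.

Hypothesis cycles_in_EH : forall e, on_cycle st ar e -> e \in EH.

Lemma edge_count_in_cycle_space s :
  is_cycle st ar s -> (vec_row (edge_count R s) <= cycle_space)%MS.
Proof.
move=> s_cyc; apply/sub_cycle_space; split.
  move=> e e_notH; apply/eqP; rewrite pnatr_eq0 -leqn0 leqNgt -has_count has_pred1.
  by apply: contra e_notH => e_s; apply: cycles_in_EH; exists s.
by apply: circulation_edge_count; rewrite -is_cycleE.
Qed.

Lemma cycle_vec_in_cycle_space s :
  is_cycle st ar s -> (vec_row (cycle_vec R s) <= cycle_space)%MS.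
Proof.
move=> /edge_count_in_cycle_space/(scalemx_sub (size s)%:R^-1); congr (_ <= _)%MS.
by apply/rowP => j; rewrite !mxE mulrC.
Qed.

Lemma cycle_space_neq0 : (exists s, s != [::] /\ is_cycle st ar s) ->
  (0 < \rank cycle_space)%N.
Proof.
move=> [[|e s] [// _ s_cyc]].
rewrite lt0n mxrank_eq0; apply: contraTneq (edge_count_in_cycle_space s_cyc) => ->.
rewrite submx0; apply/eqP => /rowP/(_ (enum_rank e)).
by rewrite !mxE enum_rankK /edge_count /= eqxx => /eqP; rewrite pnatr_eq0.
Qed.

Lemma cycle_polytope_sub x : cycle_polytope st ar x ->
  (vec_row x <= cycle_space)%MS /\ \sum_e x e = 1.
Proof.
move=> [cs [lam [size_lam cs_simple lam_ge0 lam_sum1 xE]]].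
have cs_i_simple (i : 'I_(size cs)) : is_simple_cycle st ar (nth [::] cs i).
  exact/(allP cs_simple)/mem_nth.
split.
  have -> : vec_row x =
      \sum_(i < size cs) lam`_i *: vec_row (cycle_vec R (nth [::] cs i)).
    by apply/rowP => j; rewrite mxE xE summxE; apply: eq_bigr => i _; rewrite !mxE.
  apply: summx_sub => i _; apply/scalemx_sub/cycle_vec_in_cycle_space.
  by case/and3P: (cs_i_simple i).
under eq_bigr do rewrite xE.
rewrite exchange_big /= -lam_sum1; apply: eq_bigr => i _.
by rewrite -mulr_sumr sum_cycle_vec ?mulr1 //; case/and3P: (cs_i_simple i).
Qed.
End CycleSpace.

Lemma cycle_polytope_cycle_vec (R : realFieldType) (V E : finType)
    (st ar : E -> V) c :
  is_simple_cycle st ar c -> cycle_polytope st ar (cycle_vec R c).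
Proof.
move=> c_simple; exists [:: c], [:: 1]; split => /=; rewrite ?c_simple ?ler01 //.
  by rewrite big_ord1.
by move=> e; rewrite big_ord1 mul1r.
Qed.

Theorem mainTheorem4 (R : realFieldType) (V E : finType) (st ar : E -> V)
    (EH : {set E}) :
  (exists s : seq E, s != [::] /\ is_cycle st ar s) ->
  (forall e, e \in EH <-> on_cycle st ar e) ->
  exists d : nat,
    affine_dim (cycle_polytope st ar (R:=R)) d /\
    (d%:Z = #|EH|%:Z - #|V|%:Z + (n_components st ar EH)%:Z - 1)%R.
Proof.
move=> has_cycle EH_cycles.
have cycles_in_EH e : on_cycle st ar e -> e \in EH by move/EH_cycles.
have rank_gt0 := cycle_space_neq0 R cycles_in_EH has_cycle.
have := rank_cycle_space R st ar EH.
exists (\rank (cycle_space R st ar EH)).-1; split; last by lia.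
have [cs cs_simple span] := cycle_space_spanned R (fun e => (EH_cycles e).1).
apply: (affine_dim_rank (p := fun i => cycle_vec R (nth [::] cs i))) span rank_gt0.
  exact: cycle_polytope_sub.
by move=> i; apply/cycle_polytope_cycle_vec/(allP cs_simple)/mem_nth.
Qed.
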